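(* Let $\alpha\in\mathbb{R}^n$ be badly approximable with constant $D=D(\alpha)>0$, i.e. $\max_{1\le j\le n}\min_{a_j\in\mathbb{Z}}|p\alpha_j-a_j|\ge Dp^{-1/n}$ for all $p\in\mathbb{N}$, and let $f$ be a strictly convex norm on $\mathbb{R}^n$. Then there exist $w=w(D,f)\in\mathbb{N}$ and $\delta=\delta(D,f)>0$ such that for every $\nu\ge1$ there is a natural $j$ with $\nu\le j\le\nu+w$ and $$\Xi_{j+1}\notin B_f^{1+\delta}(\Xi_j),$$ where $\Xi_j=\xi_j/f(\xi_j)$, $\xi_j=\alpha p_j-a_j$, and $(p_j,a_j)$ is the $j$-th $f$-best simultaneous approximation to $\alpha$.
   Context: A norm $f$ here is a continuous function $\mathbb{R}^n\to\mathbb{R}_+$ with $f(x)=0\iff x=0$, $f(-x)=f(x)$, $f(tx)=tf(x)$ for $t\ge0$, and convex unit ball $B_f^1=\{y:f(y)\le1\}$ with $0$ in its interior; $f$ is strictly convex if $B_f^1$ is strictly convex (its boundary contains no line segments). $B_f^\lambda(a)=\{y: f(y-a)\le\lambda\}$. For $\alpha\in\mathbb{R}^n$, an $f$-best simultaneous approximation is an integer point $\tau=(p,a_1,\dots,a_n)\in\mathbb{Z}^{n+1}$ with $p\ge1$ such that $f(\alpha q-b)>f(\alpha p-a)$ for all $(q,b)\in\mathbb{Z}^{n+1}$ with $1\le q\le p-1$ and for all $(p,b)$ with $b\ne a$. They form a sequence $(p_\nu,a_\nu)$ with $p_1<p_2<\dots$. *)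

From HB Require Import structures.
From mathcomp Require Import all_boot all_order all_algebra.
From mathcomp Require Import all_classical all_reals all_analysis.
Set Implicit Arguments. Unset Strict Implicit. Unset Printing Implicit Defensive.
Import Order.TTheory GRing.Theory Num.Theory.
Import numFieldNormedType.Exports.
Local Open Scope classical_set_scope.
Local Open Scope ring_scope.

Definition fball (R : realType) (n : nat) (f : 'rV[R]_n -> R) (lam : R) (a : 'rV[R]_n)
  : set 'rV[R]_n := [set y | f (y - a) <= lam].

Definition is_norm (R : realType) (n : nat) (f : 'rV[R]_n -> R) : Prop :=
  continuous f /\
  (forall x, 0 <= f x) /\
  (forall x, f x = 0 <-> x = 0) /\
  (forall x, f (- x) = f x) /\
  (forall (t : R) x, 0 <= t -> f (t *: x) = t * f x) /\
  (forall x y (t : R), fball f 1 0 x -> fball f 1 0 y -> 0 <= t <= 1 ->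
      fball f 1 0 ((1 - t) *: x + t *: y)) /\
  nbhs (0 : 'rV[R]_n) (fball f 1 0).

Definition strictly_convex_norm (R : realType) (n : nat) (f : 'rV[R]_n -> R) : Prop :=
  is_norm f /\
  forall x y : 'rV[R]_n, x != y ->
    ~ (forall t : R, 0 <= t <= 1 ->
         (closure (fball f 1 0) `\` interior (fball f 1 0)) ((1 - t) *: x + t *: y)).

(* Distance from x to the nearest integer: min_{a in Z} |x - a|. *)
Definition distZ (R : realType) (x : R) : R :=
  Num.min (x - (Num.floor x)%:~R) ((Num.floor x + 1)%:~R - x).

Definition badly_approx (R : realType) (n : nat) (alpha : 'rV[R]_n) (D : R) : Prop :=
  forall p : nat, (1 <= p)%N ->
    D * ((p%:R : R) `^ (- (n%:R)^-1)) <=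
      \big[Num.max/0]_(j < n) distZ ((p%:R : R) * alpha 0 j).

Definition xi (R : realType) (n : nat) (alpha : 'rV[R]_n) (p : nat) (a : 'rV[int]_n)
  : 'rV[R]_n := (p%:R : R) *: alpha - map_mx (fun z : int => z%:~R) a.

Definition best_approx (R : realType) (n : nat) (f : 'rV[R]_n -> R)
  (alpha : 'rV[R]_n) (p : nat) (a : 'rV[int]_n) : Prop :=
  (1 <= p)%N /\
  (forall (q : nat) (b : 'rV[int]_n), (1 <= q <= p - 1)%N ->
      f (xi alpha p a) < f (xi alpha q b)) /\
  (forall b : 'rV[int]_n, b != a -> f (xi alpha p a) < f (xi alpha p b)).

(* (P, A) (indexed from 1) is the sequence of all f-best approximations,
   listed with strictly increasing denominators p_1 < p_2 < ... *)
Definition best_approx_seq (R : realType) (n : nat) (f : 'rV[R]_n -> R)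
  (alpha : 'rV[R]_n) (P : nat -> nat) (A : nat -> 'rV[int]_n) : Prop :=
  (forall j, (1 <= j)%N -> best_approx f alpha (P j) (A j)) /\
  (forall j, (1 <= j)%N -> (P j < P j.+1)%N) /\
  (forall p a, best_approx f alpha p a -> exists2 j, (1 <= j)%N & P j = p /\ A j = a).

From HB Require Import structures.
From mathcomp Require Import all_boot all_order all_algebra.
From mathcomp Require Import all_classical all_reals all_analysis.
From mathcomp Require Import ring lra zify.
Import Order.TTheory GRing.Theory Num.Theory.
Import numFieldNormedType.Exports.
Local Open Scope classical_set_scope.
Local Open Scope ring_scope.
Set Implicit Arguments. Unset Strict Implicit. Unset Printing Implicit Defensive.

(* Strict convexity and compactness give, for every [s < 1], a [delta > 0] such
   that [f (V - U) <= 1 + delta] forces [f (s V - U) < 1] for unit vectors [U, V].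
   Writing [err_j = f (xi_j)], if [Xi_{j+1}] lies in the [(1 + delta)]-ball around
   [Xi_j] and [err_j] is small, then [err_{j+1} > s err_j]: otherwise
   [xi_{j+1} - xi_j], an approximation with denominator [< p_{j+1}], would be
   shorter than [xi_j]. On the other hand [err] halves within a fixed number [M]
   of steps: a parity pigeonhole gives [p_{k + 2^(n+1)} >= 3 p_k], so Dirichlet's
   theorem at the scale [K p_nu^(1/n)] beats the bound
   [err_nu >= c D p_nu^(-1/n)] coming from bad approximability. Choosing [s]
   with [s^M > 1/2], no [M] consecutive steps stay inside the balls, so
   [w = 2 M] works. *)

Lemma mx_norm_coord_le (R : realType) m n (M : 'M[R]_(m, n)) i j : `|M i j| <= `|M|.
Proof.
change (`|M i j| <= mx_norm M); rewrite mx_normrE.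
exact: (le_bigmax _ (fun ij : 'I_m * 'I_n => `|M ij.1 ij.2|) (i, j)).
Qed.

Lemma expr_powR_invn (R : realType) (a : R) k : 0 <= a -> (0 < k)%N ->
  (a `^ k%:R^-1) ^+ k = a.
Proof.
move=> a_ge0 k_gt0; rewrite -powR_mulrn ?powR_ge0 // -powRrM mulVf ?powRr1 //.
by rewrite pnatr_eq0 -lt0n.
Qed.

Lemma exists_nat_between (R : realType) (y : R) : 1 <= y ->
  exists Q : nat, [/\ (1 <= Q)%N, y < Q%:R & Q%:R <= 2 * y].
Proof.
move=> y_ge1; exists (Num.truncn y).+1; split => //; first exact: truncnS_gt.
have /andP[+ _] := truncn_itv (le_trans ler01 y_ge1).
by rewrite -addn1 natrD; lra.
Qed.

Lemma bernoulli_ineq (R : realFieldType) (e : R) (m : nat) : 0 <= e <= 1 ->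
  1 - m%:R * e <= (1 - e) ^+ m.
Proof.
move=> /andP[e_ge0 e_le1]; elim: m => [|m IH]; first by rewrite mul0r subr0 expr0.
rewrite exprSr -natr1.
have : (1 - m%:R * e) * (1 - e) <= (1 - e) ^+ m * (1 - e).
  by rewrite ler_wpM2r // subr_ge0.
have : 0 <= m%:R * e :> R by rewrite mulr_ge0 ?ler0n.
nra.
Qed.

Lemma exists_exprn_gt_half (R : realFieldType) (M : nat) :
  exists2 s : R, 0 < s < 1 & 2^-1 < s ^+ M.
Proof.
pose e : R := (2 * M.+1%:R)^-1.
have M1_ge1 : 1 <= M.+1%:R :> R by rewrite ler1n.
have e_gt0 : 0 < e by rewrite invr_gt0 mulr_gt0 ?ltr0n.
have e_le_half : e <= 2^-1 by rewrite lef_pV2 ?posrE ?mulr_gt0 ?ltr0n //; lra.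
have Me : M%:R * e = 2^-1 - e.
  by rewrite /e -addn1 natrD; field; have := ler0n R M; lra.
exists (1 - e); first by apply/andP; split; lra.
have e01 : 0 <= e <= 1 by apply/andP; split; lra.
by have := bernoulli_ineq M e01; lra.
Qed.

Section Norms.
Variables (R : realType) (n : nat) (f : 'rV[R]_n -> R).
Hypothesis fnorm : is_norm f.

Lemma continuous_normf : continuous f.
Proof. by case: fnorm. Qed.

Lemma normf_ge0 x : 0 <= f x.
Proof. by have [_ [ge0 _]] := fnorm; exact: ge0. Qed.

Lemma normf_eq0 x : f x = 0 <-> x = 0.
Proof. by have [_ [_ [eq0 _]]] := fnorm; exact: eq0. Qed.

Lemma normf0 : f 0 = 0.
Proof. exact/normf_eq0. Qed.

Lemma normfN x : f (- x) = f x.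
Proof. by have [_ [_ [_ [fN _]]]] := fnorm; exact: fN. Qed.

Lemma normfZ_nneg t x : 0 <= t -> f (t *: x) = t * f x.
Proof. by have [_ [_ [_ [_ [fZ _]]]]] := fnorm; exact: fZ. Qed.

Lemma normfZ t x : f (t *: x) = `|t| * f x.
Proof.
have [t_ge0|t_lt0] := leP 0 t; first by rewrite ger0_norm // normfZ_nneg.
by rewrite ltr0_norm // -normfN -scaleNr normfZ_nneg // oppr_ge0 ltW.
Qed.

Lemma normf_normalize x : f x != 0 -> f ((f x)^-1 *: x) = 1.
Proof. by move=> fx0; rewrite normfZ_nneg ?invr_ge0 ?normf_ge0 // mulVf. Qed.

Lemma normfD x y : f (x + y) <= f x + f y.
Proof.
have [/normf_eq0 ->|fx0] := eqVneq (f x) 0; first by rewrite add0r normf0 add0r.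
have [/normf_eq0 ->|fy0] := eqVneq (f y) 0; first by rewrite addr0 normf0 addr0.
have fx_gt0 : 0 < f x by rewrite lt_def fx0 normf_ge0.
have fy_gt0 : 0 < f y by rewrite lt_def fy0 normf_ge0.
set s := f x + f y; have s_gt0 : 0 < s by rewrite /s; lra.
have t01 : 0 <= f y / s <= 1.
  apply/andP; split; first exact: divr_ge0 (ltW fy_gt0) (ltW s_gt0).
  by rewrite ler_pdivrMr // mul1r /s; lra.
have ball1 z : f z != 0 -> fball f 1 0 ((f z)^-1 *: z).
  by move=> fz0; rewrite /fball /= subr0 normf_normalize.
have [_ [_ [_ [_ [_ [convex _]]]]]] := fnorm.
have := convex _ _ _ (ball1 _ fx0) (ball1 _ fy0) t01.
(* [x + y] is [s] times a convex combination of the unit vectors [x / f x], [y / f y] *)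
have -> : (1 - f y / s) *: ((f x)^-1 *: x) + f y / s *: ((f y)^-1 *: y)
          = s^-1 *: (x + y).
  have -> : 1 - f y / s = f x / s by rewrite /s; field; lra.
  by rewrite !scalerA scalerDr; congr (_ *: _ + _ *: _); field; lra.
rewrite /fball /= subr0 normfZ_nneg; last by rewrite invr_ge0 ltW.
by rewrite mulrC ler_pdivrMr // mul1r.
Qed.

Lemma normf_sum (I : Type) (r : seq I) (P : pred I) (F : I -> 'rV[R]_n) :
  f (\sum_(i <- r | P i) F i) <= \sum_(i <- r | P i) f (F i).
Proof.
elim: r => [|a r IH]; first by rewrite !big_nil normf0.
rewrite !big_cons; case: (P a) => //.
by apply: le_trans (normfD _ _) _; rewrite lerD2l.
Qed.

Lemma normf_convex x y t : 0 <= t <= 1 ->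
  f ((1 - t) *: x + t *: y) <= (1 - t) * f x + t * f y.
Proof.
move=> /andP[t_ge0 t_le1]; apply: le_trans (normfD _ _) _.
by rewrite !normfZ_nneg // subr_ge0.
Qed.

Lemma normf_le_coord x : f x <= \sum_(j < n) `|x 0 j| * f (delta_mx 0 j).
Proof.
rewrite {1}(matrix_sum_delta x) big_ord1.
apply: le_trans (normf_sum _ _ _) _.
by apply: ler_sum => j _; rewrite normfZ.
Qed.

Lemma normf_eq1_boundary z : f z = 1 ->
  (closure (fball f 1 0) `\` interior (fball f 1 0)) z.
Proof.
move=> fz1; split; first by apply: subset_closure; rewrite /fball /= subr0 fz1.
rewrite /interior /= => /nbhs_ballP[e /= e_gt0 ball_sub].
(* [(1 + eta) z] lies in the ball around [z] but outside the unit ball *)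
pose eta := e / (2 * (`|z| + 1)).
have eta_gt0 : 0 < eta by rewrite divr_gt0 // mulr_gt0 // ltr_wpDl.
have : ball z e ((1 + eta) *: z).
  rewrite -ball_normE /ball_ /=.
  have -> : z - (1 + eta) *: z = - eta *: z.
    by rewrite scalerDl scale1r opprD addrA subrr add0r scaleNr.
  rewrite normrZ normrN gtr0_norm // /eta -mulrA gtr_pMr //.
  rewrite mulrC ltr_pdivrMr; last by rewrite mulr_gt0 // ltr_wpDl.
  have := normr_ge0 z; lra.
move/ball_sub; rewrite /fball /= subr0 normfZ_nneg; last by rewrite ltW // ltr_wpDl.
by rewrite fz1 mulr1; lra.
Qed.

Lemma continuous_normf_comb (a b : R) :
  continuous (fun p : 'rV[R]_n * 'rV[R]_n => f (a *: p.2 - b *: p.1)).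
Proof.
move=> p.
have comb : {for p, continuous (fun p : 'rV[R]_n * 'rV[R]_n => a *: p.2 - b *: p.1)}.
  apply: continuousB; apply: continuousZ; try exact: cvg_cst;
    by case: p => ? ?; first [exact: cvg_snd | exact: cvg_fst].
by apply: continuous_comp comb _; exact: continuous_normf.
Qed.

Lemma normf_ge_mx_norm : exists2 c : R, 0 < c & forall x, c * `|x| <= f x.
Proof.
pose S := [set x : 'rV[R]_n | `|x| = 1].
have S_normalize x : x != 0 -> S (`|x|^-1 *: x).
  by move=> x0; rewrite /S /= normrZ normfV normr_id mulVf ?normr_eq0.
have [S0|S_empty] := pselect (S !=set0); last first.
  exists 1 => // x; have [->|x0] := eqVneq x 0; first by rewrite normr0 mulr0 normf0.
  by case: S_empty; exists (`|x|^-1 *: x); exact: S_normalize.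
have S_compact : compact S.
  apply: bounded_closed_compact; last first.
    exact: (continuous_closedP _).1 (@norm_continuous _ _) _ (@closed_eq _ 1).
  by exists 1; split; [rewrite num_real | move=> M M1 x /= ->; rewrite ltW].
have [y /[1!inE] Sy ymin] :=
  compact_EVT_min S0 S_compact (continuous_subspaceT continuous_normf).
have fy_gt0 : 0 < f y.
  rewrite lt_def normf_ge0 andbT; apply/eqP => /normf_eq0 y0.
  by move: Sy; rewrite /S /= y0 normr0 => /eqP; rewrite eq_sym oner_eq0.
exists (f y) => // x; have [->|x0] := eqVneq x 0; first by rewrite normr0 mulr0 normf0.
have := ymin _ (mem_set (S_normalize _ x0)).
rewrite normfZ_nneg ?invr_ge0 // => fy_le.
by rewrite -ler_pdivlMr ?normr_gt0 // mulrC.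
Qed.

Lemma compact_normf_eq1 : compact [set x | f x = 1].
Proof.
have [c c_gt0 cf] := normf_ge_mx_norm.
apply: bounded_closed_compact; last first.
  exact: (continuous_closedP _).1 continuous_normf _ (@closed_eq _ 1).
exists c^-1; split; first by rewrite num_real.
move=> M cM x /= fx1; apply: ltW; apply: le_lt_trans cM.
by rewrite -[c^-1]mulr1 ler_pdivlMl // -fx1 cf.
Qed.

End Norms.

Section StrictConvexity.
Variables (R : realType) (n : nat) (f : 'rV[R]_n -> R).
Hypothesis fconvex : strictly_convex_norm f.
Let fnorm : is_norm f := fconvex.1.

Lemma strictly_convex_chord x y : f x = 1 -> f y = 1 -> x != y ->
  exists2 t : R, 0 <= t <= 1 & f ((1 - t) *: x + t *: y) < 1.
Proof.
move=> fx1 fy1 xy; have [t] := (existsNP _).2 (fconvex.2 x y xy).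
move=> /not_implyP[t01 not_boundary]; exists t => //.
rewrite lt_neqAle; apply/andP; split.
  by apply/eqP => /(normf_eq1_boundary fnorm).
by apply: le_trans (normf_convex fnorm _ _ t01) _; rewrite fx1 fy1; lra.
Qed.

Lemma strictly_convex_shrink s U V : 0 < s < 1 -> f U = 1 -> f V = 1 ->
  f (V - U) <= 1 -> f (s *: V - U) < 1.
Proof.
move=> /andP[s_gt0 s_lt1] fU1 fV1 fVU.
have fNU1 : f (- U) = 1 by rewrite (normfN fnorm).
have s01 : 0 <= s <= 1 by rewrite !ltW.
have sVU_comb : s *: V - U = (1 - s) *: (- U) + s *: (V - U).
  by apply/rowP => i; rewrite !mxE; ring.
have fsVU_le1 : f (s *: V - U) <= 1.
  rewrite sVU_comb; apply: le_trans (normf_convex fnorm _ _ s01) _.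
  by rewrite fNU1; have := ler_wpM2l (ltW s_gt0) fVU; lra.
rewrite lt_neqAle fsVU_le1 andbT; apply/eqP => fsVU1.
have NU_neq : - U != s *: V - U.
  apply/eqP => /(congr1 (+%R^~ U)); rewrite addNr subrK => /esym/eqP.
  rewrite scaler_eq0 gt_eqF //= => /eqP V0.
  by move: fV1; rewrite V0 (normf0 fnorm) => /eqP; rewrite eq_sym oner_eq0.
(* strict convexity gives a point [u V - U] with [u <= s] strictly inside the unit
   ball; [s V - U] is a nontrivial convex combination of it and [V - U] *)
have [t /andP[t_ge0 t_le1]] := strictly_convex_chord fNU1 fsVU1 NU_neq.
set u := t * s.
have -> : (1 - t) *: - U + t *: (s *: V - U) = u *: V - U.
  by apply/rowP => i; rewrite !mxE /u; ring.
set a := f (u *: V - U) => fa.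
have u_lt1 : u < 1 by rewrite /u; nra.
have u_le_s : u <= s by rewrite /u; nra.
set lam := (1 - s) / (1 - u).
have lam_gt0 : 0 < lam by rewrite divr_gt0; lra.
have lam_le1 : lam <= 1 by rewrite ler_pdivrMr; lra.
have lam01 : 0 <= 1 - lam <= 1 by apply/andP; split; lra.
have := normf_convex fnorm (u *: V - U) (V - U) lam01.
have -> : (1 - (1 - lam)) *: (u *: V - U) + (1 - lam) *: (V - U) = s *: V - U.
  by apply/rowP => i; rewrite !mxE /lam; field; lra.
rewrite fsVU1 -/a.
have : (1 - lam) * f (V - U) <= (1 - lam) * 1 by rewrite ler_wpM2l //; lra.
have : lam * a < lam * 1 by rewrite ltr_pM2l.
lra.
Qed.

(* [f (V - U)] attains a minimum [> 1] on the compact set of pairs of unit vectors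
   with [f (s V - U) >= 1] *)
Lemma strictly_convex_shrink_uniform s : 0 < s < 1 ->
  exists2 d : R, 0 < d & forall U V, f U = 1 -> f V = 1 ->
    f (V - U) <= 1 + d -> f (s *: V - U) < 1.
Proof.
move=> s01; pose sphere := [set x | f x = 1].
pose K := (sphere `*` sphere) `&`
          [set p : 'rV[R]_n * 'rV[R]_n | 1 <= f (s *: p.2 - 1 *: p.1)].
have K_compact : compact K.
  apply: compact_closedI; first by apply: compact_setX; exact: compact_normf_eq1.
  apply: (continuous_closedP _).1 (@closed_ge _ 1).
  exact: (@continuous_normf_comb _ _ _ fnorm s 1).
have inK U V : f U = 1 -> f V = 1 -> 1 <= f (s *: V - U) -> K (U, V).
  by move=> fU1 fV1 h; split => //=; rewrite scale1r.
have [K0|K_empty] := pselect (K !=set0); last first.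
  exists 1 => // U V fU1 fV1 _; rewrite ltNge; apply/negP => h.
  by apply: K_empty; exists (U, V); exact: inK.
have [[U0 V0] KUV0 K_min] := compact_EVT_min K0 K_compact
  (continuous_subspaceT (@continuous_normf_comb _ _ _ fnorm 1 1)).
move: KUV0; rewrite inE => -[[/= fU01 fV01] /=]; rewrite scale1r => fsV0U0.
rewrite /= !scale1r in K_min.
have m_gt1 : 1 < f (V0 - U0).
  rewrite ltNge; apply/negP => fV0U0.
  by have := strictly_convex_shrink s01 fU01 fV01 fV0U0; lra.
exists ((f (V0 - U0) - 1) / 2); first by rewrite divr_gt0 // subr_gt0.
move=> U V fU1 fV1 fVU; rewrite ltNge; apply/negP => fsVU.
have := K_min (U, V); rewrite inE /= !scale1r => /(_ (inK _ _ fU1 fV1 fsVU)).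
lra.
Qed.

End StrictConvexity.

Section Approximation.
Variables (R : realType) (n : nat) (alpha : 'rV[R]_n).

Lemma xiE p a i j : xi alpha p a i j = p%:R * alpha i j - (a i j)%:~R.
Proof. by rewrite !mxE. Qed.

Lemma xiB p q a b : (q <= p)%N ->
  xi alpha p a - xi alpha q b = xi alpha (p - q) (a - b).
Proof. by move=> qp; apply/rowP => i; rewrite !mxE natrB // intrB; ring. Qed.

Lemma distZ_le (x : R) (z : int) : distZ x <= `|x - z%:~R|.
Proof.
rewrite /distZ; have /andP[floor_le lt_floor1] := floor_itv x.
rewrite intrD in lt_floor1.
have [z_le|z_gt] := leP z (Num.floor x).
  have : (z%:~R : R) <= (Num.floor x)%:~R by rewrite ler_int.
  by move=> ?; rewrite ger0_norm ?ge_min; [apply/orP; left|]; lra.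
have : ((Num.floor x + 1)%:~R : R) <= z%:~R by rewrite ler_int; lia.
by rewrite intrD => ?; rewrite ler0_norm ?ge_min; [apply/orP; right|]; lra.
Qed.

Definition fracr (x : R) := x - (Num.floor x)%:~R.

Lemma fracr_itv x : 0 <= fracr x < 1.
Proof.
have /andP[floor_le lt_floor1] := floor_itv x; rewrite intrD in lt_floor1.
by rewrite /fracr; apply/andP; split; lra.
Qed.

Lemma truncn_fracr_lt (Q : nat) x : (0 < Q)%N -> (Num.truncn (Q%:R * fracr x) < Q)%N.
Proof.
move=> Q_gt0; have /andP[fx_ge0 fx_lt1] := fracr_itv x.
rewrite truncn_lt_nat ?mulr_ge0 ?ler0n //.
by rewrite -[X in _ < X]mulr1 ltr_pM2l ?ltr0n.
Qed.

Lemma fracr_close (Q : nat) x y : (0 < Q)%N ->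
  Num.truncn (Q%:R * fracr x) = Num.truncn (Q%:R * fracr y) ->
  `|fracr x - fracr y| < Q%:R^-1.
Proof.
move=> Q_gt0 same_box; have Q_gt0' : (0 : R) < Q%:R by rewrite ltr0n.
have := truncn_itv (mulr_ge0 (ltW Q_gt0') (proj1 (andP (fracr_itv x)))).
have := truncn_itv (mulr_ge0 (ltW Q_gt0') (proj1 (andP (fracr_itv y)))).
rewrite same_box -addn1 natrD => /andP[y_ge y_lt] /andP[x_ge x_lt].
have -> : fracr x - fracr y = Q%:R^-1 * (Q%:R * fracr x - Q%:R * fracr y).
  by field; rewrite lt0r_neq0.
rewrite normrM gtr0_norm ?invr_gt0 // gtr_pMr ?invr_gt0 // ltr_norml.
by apply/andP; split; lra.
Qed.

(* pigeonhole over the [Q ^ n] boxes of side [1 / Q] containing [fracr (t alpha)] *)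
Lemma dirichlet_simultaneous (Q : nat) : (1 <= Q)%N ->
  exists q b, (1 <= q <= Q ^ n)%N /\ forall i, `|xi alpha q b 0 i| < Q%:R^-1.
Proof.
move=> Q_gt0.
pose box (t : 'I_(Q ^ n).+1) : {ffun 'I_n -> 'I_Q} :=
  [ffun i => Ordinal (truncn_fracr_lt (t%:R * alpha 0 i) Q_gt0)].
have /injectivePn[t1 [t2 t12 same_box]] : ~~ injectiveb box.
  by apply/injectiveP => /leq_card; rewrite card_ffun !card_ord ltnn.
wlog lt_t12 : t1 t2 t12 same_box / (t1 < t2)%N.
  move=> wlog_lt; have [lt|gt|/val_inj eq] := ltngtP t1 t2; first exact: wlog_lt lt.
    by apply: (wlog_lt t2 t1); rewrite // eq_sym.
  by rewrite eq eqxx in t12.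
pose b := \row_i (Num.floor (t2%:R * alpha 0 i) - Num.floor (t1%:R * alpha 0 i)).
exists (t2 - t1)%N, b; split; first by have := ltn_ord t2; lia.
move=> i; have -> : xi alpha (t2 - t1) b 0 i
                    = fracr (t2%:R * alpha 0 i) - fracr (t1%:R * alpha 0 i).
  by rewrite xiE mxE natrB ?(ltnW lt_t12) // intrB /fracr; ring.
apply: fracr_close => //.
move/(congr1 (fun g : {ffun 'I_n -> 'I_Q} => val (g i))): same_box.
by rewrite !ffunE /= => ->.
Qed.

End Approximation.

Section BestApproximations.
Variables (R : realType) (n : nat) (f : 'rV[R]_n -> R) (alpha : 'rV[R]_n).
Hypothesis fnorm : is_norm f.

Definition basis_normf_sum := \sum_(i < n) f (delta_mx 0 i).

Lemma dirichlet_normf (Q : nat) : (1 <= Q)%N ->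
  exists q b, (1 <= q <= Q ^ n)%N /\ f (xi alpha q b) <= Q%:R^-1 * basis_normf_sum.
Proof.
move=> Q_ge1; have [q [b [q_range xi_small]]] := dirichlet_simultaneous alpha Q_ge1.
exists q, b; split => //; apply: le_trans (normf_le_coord fnorm _) _.
rewrite mulr_sumr; apply: ler_sum => i _.
by apply: ler_wpM2r; [exact: normf_ge0 | exact: ltW].
Qed.

Variable c : R.
Hypothesis c_gt0 : 0 < c.
Hypothesis c_le_normf : forall x, c * `|x| <= f x.

(* two such approximations differ by an integer vector of norm [< c] *)
Lemma small_approx_unique q b b' :
  f (xi alpha q b) < c / 2 -> f (xi alpha q b') < c / 2 -> b = b'.
Proof.
move=> fb fb'; apply/rowP => i; apply/eqP/negPn/negP => bb'.
set d := xi alpha q b - xi alpha q b'.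
have fd : f d < c.
  by apply: le_lt_trans (normfD fnorm _ _) _; rewrite (normfN fnorm); lra.
have d_ge1 : 1 <= `|d 0 i|.
  have -> : d 0 i = (b' 0 i - b 0 i)%:~R by rewrite !mxE intrB; ring.
  by rewrite -intr_norm ler1z -gtz0_ge1 normr_gt0 subr_eq0 eq_sym.
have : c <= c * `|d|.
  by apply: ler_peMr; [exact: ltW | exact: le_trans d_ge1 (mx_norm_coord_le _ _ _)].
by have := c_le_normf d; lra.
Qed.

Lemma best_approx_below q b : (1 <= q)%N -> f (xi alpha q b) < c / 2 ->
  exists p a, [/\ best_approx f alpha p a, (p <= q)%N &
                  f (xi alpha p a) <= f (xi alpha q b)].
Proof.
elim/ltn_ind: q b => q IH b q_ge1 fb.
have [[q' [b' [/andP[q'_ge1 q'q] fb'b]]]|no_better] :=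
  pselect (exists q' b', (1 <= q' < q)%N /\ f (xi alpha q' b') <= f (xi alpha q b)).
  have [p [a [best pq' fab']]] := IH q' q'q b' q'_ge1 (le_lt_trans fb'b fb).
  exists p, a; split => //; first exact: leq_trans pq' (ltnW q'q).
  exact: le_trans fab' fb'b.
exists q, b; split => //; split => //; split.
  move=> q' b' /andP[q'_ge1 q'q]; rewrite ltNge; apply/negP => fb'b.
  by apply: no_better; exists q', b'; split => //; rewrite q'_ge1 /=; lia.
move=> b' b'b; rewrite ltNge; apply/negP => fb'b.
by move: b'b; rewrite (small_approx_unique (le_lt_trans fb'b fb) fb) eqxx.
Qed.

Lemma badly_approx_err_ge D p a : badly_approx alpha D -> (1 <= p)%N ->
  c * (D * p%:R `^ (- n%:R^-1)) <= f (xi alpha p a).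
Proof.
move=> alpha_bad p_ge1; apply: le_trans (c_le_normf _) => /=.
apply: ler_wpM2l; first exact: ltW.
apply: le_trans (alpha_bad p p_ge1) _; apply: bigmax_le => // i _.
by apply: le_trans (mx_norm_coord_le _ 0 i); rewrite xiE; exact: distZ_le.
Qed.

Variables (P : nat -> nat) (A : nat -> 'rV[int]_n).
Hypothesis Pbest : best_approx_seq f alpha P A.

Local Notation err k := (f (xi alpha (P k) (A k))).

Lemma denom_ge1 j : (1 <= j)%N -> (1 <= P j)%N.
Proof. by move=> /Pbest.1[]. Qed.

Lemma denom_lt j k : (1 <= j)%N -> (j < k)%N -> (P j < P k)%N.
Proof.
move=> j_ge1; elim: k => // k IH; rewrite ltnS leq_eqVlt => /orP[/eqP <-|jk].
  exact: Pbest.2.1.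
by apply: ltn_trans (IH jk) (Pbest.2.1 _ _); exact: leq_trans j_ge1 (ltnW jk).
Qed.

Lemma denom_le j k : (1 <= j)%N -> (j <= k)%N -> (P j <= P k)%N.
Proof.
by move=> j_ge1; rewrite leq_eqVlt => /orP[/eqP ->//|jk]; exact/ltnW/denom_lt.
Qed.

Lemma err_lt j k : (1 <= j)%N -> (j < k)%N -> err k < err j.
Proof.
move=> j_ge1 jk; have [_ [better _]] := Pbest.1 k (leq_trans j_ge1 (ltnW jk)).
by apply: better; rewrite denom_ge1 //=; have := denom_lt j_ge1 jk; lia.
Qed.

Lemma err_le j k : (1 <= j)%N -> (j <= k)%N -> err k <= err j.
Proof.
by move=> j_ge1; rewrite leq_eqVlt => /orP[/eqP ->//|jk]; exact/ltW/err_lt.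
Qed.

(* a shorter [(q, b)] would produce a best approximation of index [<= j]
   and error [< err j] *)
Lemma err_min_le j q b : (1 <= j)%N -> (1 <= q)%N -> (q < P j.+1)%N ->
  Num.min (err j) (c / 2) <= f (xi alpha q b).
Proof.
move=> j_ge1 q_ge1 q_lt; rewrite leNgt; apply/negP; rewrite lt_min => /andP[fb_lt fb_c].
have [p [a [best pq fab]]] := best_approx_below q_ge1 fb_c.
have [k k_ge1 [Pk Ak]] := Pbest.2.2 p a best; subst p a.
have kj : (k <= j)%N.
  rewrite leqNgt; apply/negP => jk.
  by have := denom_le (leq_trans j_ge1 (leqnSn j)) jk; lia.
by have := lt_le_trans fb_lt (le_trans (err_le k_ge1 kj) fab); rewrite ltxx.
Qed.

Lemma err_min_le_diff j : (1 <= j)%N ->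
  Num.min (err j) (c / 2) <= f (xi alpha (P j.+1) (A j.+1) - xi alpha (P j) (A j)).
Proof.
move=> j_ge1; have Pj := Pbest.2.1 j j_ge1.
rewrite xiB; last exact: ltnW.
by apply: err_min_le; rewrite ?subn_gt0 ?ltn_subrL ?denom_ge1.
Qed.

(* otherwise the midpoint of the two approximations beats [(P k1, A k1)]
   with a smaller denominator *)
Lemma denom_triple_of_even k1 k2 : (1 <= k1)%N -> (k1 < k2)%N ->
  (2 %| P k2 - P k1)%N -> (forall i, (2 %| A k2 ord0 i - A k1 ord0 i)%Z) ->
  (3 * P k1 <= P k2)%N.
Proof.
move=> k1_ge1 k12 P_even A_even; rewrite leqNgt; apply/negP => P_lt.
have P12 := denom_lt k1_ge1 k12.
set q := ((P k2 - P k1) %/ 2)%N.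
have q2 : (q * 2 = P k2 - P k1)%N by rewrite divnK.
pose b := map_mx (fun z : int => (z %/ 2)%Z) (A k2 - A k1).
have b2 r i : ((A k2 r i - A k1 r i) %/ 2)%Z * 2 = A k2 r i - A k1 r i.
  by rewrite ord1 divzK.
have xi_mid : xi alpha q b = 2^-1 *: (xi alpha (P k2) (A k2) - xi alpha (P k1) (A k1)).
  rewrite xiB; last exact: ltnW.
  apply/rowP => i.
  by rewrite !mxE -q2 -[in RHS]b2 natrM intrM; field.
have [_ [better _]] := Pbest.1 k1 k1_ge1.
have := better q b; rewrite xi_mid normfZ_nneg ?invr_ge0 //.
have -> : (1 <= q <= P k1 - 1)%N by move: q2 P_lt; lia.
move=> /(_ isT).
have := normfD fnorm (xi alpha (P k2) (A k2)) (- xi alpha (P k1) (A k1)).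
by rewrite (normfN fnorm); have := err_lt k1_ge1 k12; lra.
Qed.

(* pigeonhole on the parities of the approximations of indices [k, ..., k + 2 ^ n.+1] *)
Lemma denom_triple k : (1 <= k)%N -> (3 * P k <= P (k + 2 ^ n.+1))%N.
Proof.
move=> k_ge1.
pose parity (i : 'I_(2 ^ n.+1).+1) : bool * {ffun 'I_n -> bool} :=
  (odd (P (k + i)), [ffun j => (A (k + i) ord0 j %% 2 == 0)%Z]).
have /injectivePn[i1 [i2 i12 same_parity]] : ~~ injectiveb parity.
  apply/injectiveP => /leq_card.
  by rewrite card_prod card_ffun !card_bool !card_ord expnS ltnn.
wlog lt_i12 : i1 i2 i12 same_parity / (i1 < i2)%N.
  move=> wlog_lt; have [lt|gt|/val_inj eq] := ltngtP i1 i2; first exact: wlog_lt lt.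
    by apply: (wlog_lt i2 i1); rewrite // eq_sym.
  by rewrite eq eqxx in i12.
case: same_parity => P_parity /ffunP A_parity.
have ki12 : (k + i1 < k + i2)%N by rewrite ltn_add2l.
have ki1_ge1 : (1 <= k + i1)%N by exact: leq_trans k_ge1 (leq_addr _ _).
have ki2_le : (k + i2 <= k + 2 ^ n.+1)%N by rewrite leq_add2l -ltnS ltn_ord.
have P_even : (2 %| P (k + i2) - P (k + i1))%N.
  by rewrite dvdn2 oddB ?P_parity ?addbb //; exact/ltnW/denom_lt.
have A_even i : (2 %| A (k + i2) ord0 i - A (k + i1) ord0 i)%Z.
  have := A_parity i; rewrite !ffunE => mod2_eq.
  by rewrite -eqz_mod_dvd; apply/eqP; move: mod2_eq; lia.
have triple := denom_triple_of_even ki1_ge1 ki12 P_even A_even.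
apply: leq_trans (denom_le _ ki2_le); last exact: leq_trans ki1_ge1 (ltnW ki12).
by apply: leq_trans triple; rewrite leq_mul2l denom_le ?leq_addr ?orbT.
Qed.

Lemma denom_growth t k : (1 <= k)%N -> (3 ^ t * P k <= P (k + t * 2 ^ n.+1))%N.
Proof.
elim: t k => [|t IH] k k_ge1; first by rewrite expn0 mul1n mul0n addn0.
have := denom_triple (leq_trans k_ge1 (leq_addr (t * 2 ^ n.+1) k)).
rewrite -addnA -mulSnr => triple.
by rewrite expnS -mulnA; apply: leq_trans triple; rewrite leq_mul2l IH.
Qed.

Lemma err_le_dirichlet j (Q : nat) : (1 <= j)%N -> (1 <= Q)%N -> (Q ^ n < P j.+1)%N ->
  Q%:R^-1 * basis_normf_sum < c / 2 -> err j <= Q%:R^-1 * basis_normf_sum.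
Proof.
move=> j_ge1 Q_ge1 QP small.
have [q [b [/andP[q_ge1 qQ] fqb]]] := dirichlet_normf Q_ge1.
have := err_min_le b j_ge1 q_ge1 (leq_ltn_trans qQ QP).
by rewrite ge_min => /orP[|]; lra.
Qed.

Lemma err_le_div j (y : R) : (1 <= j)%N -> 1 <= y -> (2 * y) ^+ n < (P j.+1)%:R ->
  2 * basis_normf_sum < y * c -> err j <= basis_normf_sum / y.
Proof.
move=> j_ge1 y_ge1 yP Cy; set C := basis_normf_sum in Cy *.
have C_ge0 : 0 <= C by apply: sumr_ge0 => i _; exact: normf_ge0.
have y_gt0 : 0 < y := lt_le_trans ltr01 y_ge1.
have [Q [Q_ge1 yQ Q2y]] := exists_nat_between y_ge1.
have CQ_le : Q%:R^-1 * C <= C / y.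
  by rewrite mulrC; apply: ler_wpM2l => //; rewrite lef_pV2 ?posrE ?ltr0n // ltW.
have CQ_small : Q%:R^-1 * C < c / 2.
  by apply: le_lt_trans CQ_le _; rewrite ltr_pdivrMr //; lra.
apply: le_trans CQ_le; apply: err_le_dirichlet CQ_small => //.
rewrite -(ltr_nat R) natrX; apply: le_lt_trans yP.
by apply: lerXn2r; rewrite ?nnegrE ?ler0n //; lra.
Qed.

Variable D : R.
Hypothesis D_gt0 : 0 < D.
Hypothesis alpha_bad : badly_approx alpha D.

Lemma err_gt0 k : (1 <= k)%N -> 0 < err k.
Proof.
move=> k_ge1; apply: lt_le_trans (badly_approx_err_ge _ alpha_bad (denom_ge1 k_ge1)).
by rewrite !mulr_gt0 // powR_gt0 // ltr0n denom_ge1.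
Qed.

Lemma err_decay_at (K : R) (t nu : nat) : (0 < n)%N -> 1 <= K ->
  2 * basis_normf_sum < K * c -> 2 * basis_normf_sum < K * (c * D) ->
  (2 * K) ^+ n < (3 ^ t)%:R -> (1 <= nu)%N ->
  err (nu + t * 2 ^ n.+1) < c / 2 /\ err (nu + t * 2 ^ n.+1) <= err nu / 2.
Proof.
move=> n_gt0 K_ge1 Kc KcD Kt nu_ge1.
set j := (nu + t * 2 ^ n.+1)%N; set C := basis_normf_sum in Kc KcD *.
have j_ge1 : (1 <= j)%N by exact: leq_trans nu_ge1 (leq_addr _ _).
have Pnu_gt0 : 0 < (P nu)%:R :> R by rewrite ltr0n denom_ge1.
(* Dirichlet at the scale [K P_nu^(1/n)] versus [err nu >= c D P_nu^(-1/n)] *)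
pose x : R := (P nu)%:R `^ n%:R^-1.
have x_ge1 : 1 <= x.
  rewrite -(powRr0 (P nu)%:R); apply: ler_powR; last by rewrite invr_ge0 ler0n.
  by rewrite ler1n denom_ge1.
have Kx_ge1 : 1 <= K * x by rewrite -[1]mulr1 ler_pM.
have KxP : (2 * (K * x)) ^+ n < (P j.+1)%:R.
  rewrite mulrA exprMn /x expr_powR_invn ?(ltW Pnu_gt0) //.
  apply: lt_le_trans (_ : ((3 ^ t * P nu)%N)%:R <= _); first by rewrite natrM ltr_pM2r.
  rewrite ler_nat; apply: leq_trans (denom_growth t nu_ge1) _.
  exact: ltnW (Pbest.2.1 j j_ge1).
have KxC : 2 * C < K * x * c.
  apply: lt_le_trans Kc _; apply: ler_wpM2r; first exact: ltW.
  exact: ler_peMr (le_trans ler01 K_ge1) x_ge1.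
have err_j : err j <= C / (K * x) := err_le_div j_ge1 Kx_ge1 KxP KxC.
have err_nu := badly_approx_err_ge (A nu) alpha_bad (denom_ge1 nu_ge1).
rewrite powRN -/x in err_nu.
split; first by apply: le_lt_trans err_j _; rewrite ltr_pdivrMr; lra.
have : C / (K * x) < c * (D / x) / 2.
  rewrite ltr_pdivrMr; last lra.
  have -> : c * (D / x) / 2 * (K * x) = K * (c * D) / 2 by field; lra.
  lra.
lra.
Qed.

Variables s delta : R.
Hypothesis s_gt0 : 0 < s.
Hypothesis unit_shrink : forall U V, f U = 1 -> f V = 1 ->
  f (V - U) <= 1 + delta -> f (s *: V - U) < 1.

Local Notation Xi k := ((err k)^-1 *: xi alpha (P k) (A k)).

(* if [err j.+1 <= s * err j], then [xi_{j+1} - xi_j] is [err j] times a convex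
   combination of [- Xi j] and [s Xi j.+1 - Xi j], of norm [< err j] *)
Lemma err_ratio_gt j : (1 <= j)%N -> err j < c / 2 ->
  fball f (1 + delta) (Xi j) (Xi j.+1) -> s * err j < err j.+1.
Proof.
move=> j_ge1 err_small near; rewrite ltNge; apply/negP => err_le.
have err_gt0_j := err_gt0 j_ge1; have err_gt0_j1 := err_gt0 (ltn0Sn j).
have := err_min_le_diff j_ge1; rewrite min_l; last exact: ltW.
set U := Xi j; set V := Xi j.+1.
have fU1 : f U = 1 by rewrite normf_normalize // gt_eqF.
have fV1 : f V = 1 by rewrite normf_normalize // gt_eqF.
have fsVU := unit_shrink fU1 fV1 near.
set t := err j.+1 / (s * err j).
have t_gt0 : 0 < t by rewrite divr_gt0 ?mulr_gt0.
have t01 : 0 <= t <= 1 by rewrite ltW //= ler_pdivrMr ?mulr_gt0 // mul1r.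
have -> : xi alpha (P j.+1) (A j.+1) - xi alpha (P j) (A j)
          = err j *: ((1 - t) *: - U + t *: (s *: V - U)).
  by apply/rowP => i; rewrite !mxE /t /U /V; field; rewrite !gt_eqF.
rewrite (normfZ_nneg fnorm); last exact: ltW.
have := normf_convex fnorm (- U) (s *: V - U) t01; rewrite (normfN fnorm) fU1.
set z := f ((1 - t) *: - U + t *: (s *: V - U)) => z_le.
have t_fsVU : t * f (s *: V - U) < t * 1 by rewrite ltr_pM2l.
have : err j * z < err j * 1 by rewrite ltr_pM2l //; lra.
lra.
Qed.

Lemma err_geometric k m : (1 <= k)%N -> err k < c / 2 ->
  (forall j, (k <= j < k + m)%N -> fball f (1 + delta) (Xi j) (Xi j.+1)) ->
  s ^+ m * err k <= err (k + m).
Proof.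
move=> k_ge1 err_small; elim: m => [|m IH] near; first by rewrite mul1r addn0.
have km_ge1 : (1 <= k + m)%N by exact: leq_trans k_ge1 (leq_addr _ _).
have err_km_small : err (k + m) < c / 2.
  exact: le_lt_trans (err_le k_ge1 (leq_addr _ _)) err_small.
have near_km : fball f (1 + delta) (Xi (k + m)) (Xi (k + m).+1).
  by apply: near; rewrite leq_addr addnS ltnSn.
rewrite addnS; apply: le_trans (ltW (err_ratio_gt km_ge1 err_km_small near_km)).
rewrite exprS -mulrA; apply: ler_wpM2l; first exact: ltW.
apply: IH => j /andP[kj jkm]; apply: near.
by rewrite kj addnS ltnS (ltnW jkm).
Qed.

End BestApproximations.

Lemma err_decay (R : realType) n (f : 'rV[R]_n -> R) (c D : R) :
  (0 < n)%N -> is_norm f -> 0 < c -> (forall x, c * `|x| <= f x) -> 0 < D ->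
  exists M : nat, forall alpha P A,
    badly_approx alpha D -> best_approx_seq f alpha P A -> forall nu, (1 <= nu)%N ->
      f (xi alpha (P (nu + M)) (A (nu + M))) < c / 2 /\
      f (xi alpha (P (nu + M)) (A (nu + M))) <= f (xi alpha (P nu) (A nu)) / 2.
Proof.
move=> n_gt0 fnorm c_gt0 c_le_normf D_gt0; set C := basis_normf_sum f.
have cD_gt0 : 0 < c * D by rewrite mulr_gt0.
pose K := Num.max 1 (Num.max ((2 * C + 1) / c) ((2 * C + 1) / (c * D))).
have K_ge1 : 1 <= K by rewrite le_max lexx.
have Kc : 2 * C < K * c.
  apply: lt_le_trans (_ : 2 * C + 1 <= _); first lra.
  by rewrite -ler_pdivrMr // !le_max lexx orbT.
have KcD : 2 * C < K * (c * D).
  apply: lt_le_trans (_ : 2 * C + 1 <= _); first lra.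
  by rewrite -ler_pdivrMr // !le_max lexx !orbT.
have [t Kt] : exists t, (2 * K) ^+ n < (3 ^ t)%:R.
  exists (Num.truncn ((2 * K) ^+ n)).+1; apply: lt_le_trans (truncnS_gt _) _.
  by rewrite ler_nat; exact/ltnW/ltn_expl.
exists (t * 2 ^ n.+1)%N => alpha P A alpha_bad Pbest nu nu_ge1.
by have := err_decay_at fnorm c_gt0 c_le_normf Pbest alpha_bad
  n_gt0 K_ge1 Kc KcD Kt nu_ge1.
Qed.

Unset Implicit Arguments.

Theorem theorem2p5 (R : realType) (n : nat) (f : 'rV[R]_n -> R) (D : R) :
  (1 <= n)%N -> strictly_convex_norm f -> 0 < D ->
  exists (w : nat) (delta : R), 0 < delta /\
    forall (alpha : 'rV[R]_n) (P : nat -> nat) (A : nat -> 'rV[int]_n),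
      badly_approx alpha D ->
      best_approx_seq f alpha P A ->
      forall nu : nat, (1 <= nu)%N ->
        exists j : nat, (nu <= j <= nu + w)%N /\
          let Xi := fun k => (f (xi alpha (P k) (A k)))^-1 *: xi alpha (P k) (A k) in
          ~ fball f (1 + delta) (Xi j) (Xi j.+1).
Proof.
move=> n_ge1 fconvex D_gt0; have fnorm := fconvex.1.
have [c c_gt0 c_le_normf] := normf_ge_mx_norm fnorm.
have [M decay] := err_decay n_ge1 fnorm c_gt0 c_le_normf D_gt0.
have [s s01 s_half] := exists_exprn_gt_half R M; have /andP[s_gt0 _] := s01.
have [delta delta_gt0 shrink] := strictly_convex_shrink_uniform fconvex s01.
exists (M + M)%N, delta; split => // alpha P A alpha_bad Pbest nu nu_ge1.
apply: contrapT => no_far_step.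
pose Xi k := (f (xi alpha (P k) (A k)))^-1 *: xi alpha (P k) (A k).
have near j : (nu + M <= j < nu + M + M)%N -> fball f (1 + delta) (Xi j) (Xi j.+1).
  move=> /andP[j_ge j_lt]; apply: contrapT => far; apply: no_far_step.
  by exists j; split => //; apply/andP; split; lia.
have nuM_ge1 : (1 <= nu + M)%N by exact: leq_trans nu_ge1 (leq_addr _ _).
have [small _] := decay alpha P A alpha_bad Pbest nu nu_ge1.
have [_ half] := decay alpha P A alpha_bad Pbest (nu + M)%N nuM_ge1.
have geom := err_geometric fnorm c_gt0 c_le_normf Pbest D_gt0 alpha_bad s_gt0 shrink
  nuM_ge1 small near.
have err_gt0_nuM := err_gt0 c_gt0 c_le_normf Pbest D_gt0 alpha_bad nuM_ge1.
have : 2^-1 * f (xi alpha (P (nu + M)%N) (A (nu + M)%N))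
       < s ^+ M * f (xi alpha (P (nu + M)%N) (A (nu + M)%N)) by rewrite ltr_pM2r.
lra.
Qed.
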